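(* Let $X$ be a random variable taking values in $\mathbb{R}^n$ with a density $f$ with respect to Lebesgue measure, let $\varphi:\mathbb{R}^n\to\mathbb{R}$ be measurable, and let $a,b>0$. Assume $\mathbb{E}\, e^{\alpha\varphi(X)}<\infty$ for all $\alpha\in(-a,b)$, and let $c:(-a,b)\to\mathbb{R}$ be a smooth function such that $\alpha\mapsto e^{-c(\alpha)}\,\mathbb{E}\, e^{\alpha\varphi(X)}$ is log-concave on $(-a,b)$. Set $\psi_c(\alpha)=c(\alpha)-c(0)-c'(0)\alpha$, let $\psi_{c,+}$ be the restriction of $\psi_c$ to $(0,b)$ and $\psi_{c,-}$ its restriction to $(-a,0)$. Then for every $t>0$, $$\mathbb{P}(\varphi(X)-\mathbb{E}\varphi(X)>t)\le e^{-\psi_{c,+}^*(t)},\qquad \mathbb{P}(\varphi(X)-\mathbb{E}\varphi(X)<-t)\le e^{-\psi_{c,-}^*(-t)},$$ where $\psi_{c,\pm}^*$ denote the Fenchel–Legendre duals.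
   Context: For a function $g$ defined on a subset $D\subseteq\mathbb{R}$ (extended by $+\infty$ outside $D$), its Fenchel–Legendre dual is $g^*(x)=\sup_{y\in D}(xy-g(y))$. A function $g:I\to(0,\infty)$ is log-concave if $\log g$ is concave. *)

From HB Require Import structures.
From mathcomp Require Import all_boot all_order all_algebra.
From mathcomp Require Import all_classical all_reals all_analysis.
Set Implicit Arguments. Unset Strict Implicit. Unset Printing Implicit Defensive.
Import Order.TTheory GRing.Theory Num.Theory.
Local Open Scope classical_set_scope.
Local Open Scope ring_scope.

(* Integral w.r.t. Lebesgue measure on R^n (= n.-tuple R) of a function with
   values in \bar R, defined as the iterated one-dimensional Lebesgue
   integral (by Tonelli this is the integral w.r.t. the n-dimensional
   Lebesgue measure for nonnegative measurable integrands). *)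
Fixpoint lebesgue_int_Rn (R : realType) (n : nat) :
    (n.-tuple R -> \bar R) -> \bar R :=
  match n with
  | 0 => fun g => g [tuple]
  | n'.+1 => fun g =>
      (\int[@lebesgue_measure R]_x
         lebesgue_int_Rn (fun t : n'.-tuple R => g [tuple of x :: t]))%E
  end.

Definition has_density (d : measure_display) (T : measurableType d)
    (R : realType) (P : probability T R) (n : nat)
    (X : T -> n.-tuple R) (f : n.-tuple R -> R) :=
  measurable_fun setT f /\ (forall x, 0 <= f x) /\
  forall A : set (n.-tuple R), measurable A ->
    P (X @^-1` A) = lebesgue_int_Rn (fun x => (f x * \1_A x)%:E).

Definition concave_on (R : realType) (I : set R) (g : R -> R) :=
  forall x y t, I x -> I y -> 0 <= t <= 1 ->
    t * g x + (1 - t) * g y <= g (t * x + (1 - t) * y).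

Definition log_concave_on (R : realType) (I : set R) (g : R -> R) :=
  (forall x, I x -> 0 < g x) /\ concave_on I (fun x => ln (g x)).

Definition smooth_on (R : realType) (I : set R) (c : R -> R) :=
  forall (k : nat) x, I x -> derivable (derive1n k c) x 1.

(* Fenchel--Legendre dual of g restricted to D (g = +oo outside D) *)
Definition fenchel_dual (R : realType) (D : set R) (g : R -> R) (x : R)
  : \bar R := ereal_sup [set (x * y - g y)%:E | y in D].

(* Let L(al) = E exp(al Z) with Z = phi(X), and m = E Z.  Log-concavity of
   exp(-c) L says that the slopes of the chords of ln L - c through 0 decrease,
   so for s of sign opposite to al,
     ln L(al) - c(al) + c(0) <= (al/s) (ln L(s) - c(s) + c(0))
                             <= al m - (al/s) (c(s) - c(0)),
   the last step by Jensen's inequality ln L(s) >= s m.  Letting s -> 0 gives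
   ln L(al) - al m <= psi(al), and Chernoff's bound
   P(al (Z - m - x) > 0) <= exp(-al (m + x)) L(al), optimized over al on the
   appropriate side of 0, turns this into the two tail bounds. *)

From HB Require Import structures.
From mathcomp Require Import all_boot all_order all_algebra.
From mathcomp Require Import all_classical all_reals all_analysis.
From mathcomp Require Import ring lra.
From mathcomp Require Import measurable_realfun.
Set Implicit Arguments. Unset Strict Implicit. Unset Printing Implicit Defensive.
Import Order.TTheory GRing.Theory Num.Theory.
Import numFieldNormedType.Exports.
Local Open Scope classical_set_scope.
Local Open Scope ring_scope.

Lemma le_expeR_fenchel_dual (R : realType) (D : set R) (g : R -> R) (x p : R) :
  0 <= p -> (forall y, D y -> p <= expR (- (x * y - g y))) ->
  (p%:E <= expeR (- fenchel_dual D g x))%E.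
Proof.
move=> p_ge0 p_le; have [->|p_neq0] := eqVneq p 0; first exact: expeR_ge0.
have p_gt0 : 0 < p by rewrite lt_neqAle eq_sym p_neq0.
have dual_le : (fenchel_dual D g x <= (- ln p)%:E)%E.
  apply: ge_ereal_sup => _ [y Dy <-]; rewrite lee_fin.
  have := p_le y Dy; rewrite -ler_ln ?posrE ?expR_gt0 // expRK; lra.
have -> : p%:E = expeR (ln p)%:E by rewrite /= lnK.
by rewrite lee_expeR leeNr -EFinN.
Qed.

Lemma concave_on_chord (R : realType) (I : set R) (h : R -> R) (s x : R) :
  concave_on I h -> I s -> I x -> I 0 -> s * x < 0 ->
  h x - h 0 <= x / s * (h s - h 0).
Proof.
move=> h_cvx Is Ix I0 sx_lt0.
have s_neq0 : s != 0 by apply: contraTneq sx_lt0 => ->; rewrite mul0r ltxx.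
set u := x / s.
have us : u * s = x by rewrite /u divfK.
have u_lt0 : u < 0.
  have : 0 < s * s by rewrite -expr2 exprn_even_gt0 //= s_neq0.
  nra.
have u1_gt0 : 0 < 1 - u by lra.
set t := - u / (1 - u).
have tu : (1 - u) * t = - u by rewrite mulrC divfK ?gt_eqF.
have t01 : 0 <= t <= 1 by rewrite divr_ge0 ?ler_pdivrMr /=; lra.
have := h_cvx s x t Is Ix t01.
have -> : t * s + (1 - t) * x = 0.
  have : (1 - u) * (t * s + (1 - t) * x) = 0.
    have -> : (1 - u) * (t * s + (1 - t) * x) =
      (1 - u) * t * s + (1 - u - (1 - u) * t) * (u * s) by rewrite us; ring.
    by rewrite tu; ring.
  by move/eqP; rewrite mulf_eq0 gt_eqF //= => /eqP.
move=> chord; rewrite -subr_le0.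
suff -> : h x - h 0 - u * (h s - h 0) =
          (1 - u) * (t * h s + (1 - t) * h x - h 0) by rewrite pmulr_rle0 // subr_le0.
have -> : (1 - u) * (t * h s + (1 - t) * h x - h 0) =
  (1 - u) * t * h s + (1 - u - (1 - u) * t) * h x - (1 - u) * h 0 by ring.
by rewrite tu; ring.
Qed.

Lemma normr_le_expR_addN (R : realType) (y : R) : `|y| <= expR y + expR (- y).
Proof.
have := expR_ge1Dx y; have := expR_ge1Dx (- y).
have := expR_gt0 y; have := expR_gt0 (- y).
by case: (lerP 0 y) => y0; [rewrite ger0_norm | rewrite ltr0_norm]; lra.
Qed.

Lemma derivable_slope_cvg (R : realType) (f : R -> R) (x : R) :
  derivable f x 1 -> (fun h => (f (x + h) - f x) / h) @ 0^' --> derive1 f x.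
Proof.
rewrite /derivable derive1E /derive; set G := (fun h => _).
suff -> : G = (fun h => (f (x + h) - f x) / h) by [].
apply/funext => h; change (h^-1 * (f (h * 1 + x) - f x) = (f (x + h) - f x) / h).
by rewrite mulr1 mulrC [h + x]addrC.
Qed.

Section exponential_moments.
Context d (T : measurableType d) (R : realType) (P : probability T R).
Variables (Z : T -> R) (a b : R).
Hypotheses (mZ : measurable_fun setT Z) (a_gt0 : 0 < a) (b_gt0 : 0 < b).
Hypothesis expZ_lty :
  forall al, -a < al < b -> ('E_P[fun w => expR (al * Z w)] < +oo)%E.

Let mgf al := fine ('E_P[fun w => expR (al * Z w)])%E.
Let mean := fine ('E_P[Z])%E.

Lemma measurable_expRMZ al : measurable_fun setT (fun w => expR (al * Z w)).
Proof.
apply: measurableT_comp; first exact: measurable_expR.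
by apply: measurable_funM => //; exact: measurable_cst.
Qed.

Lemma measurable_ltZ k : measurable [set w | k < Z w].
Proof.
have := mZ measurableT (measurable_itv `]k, +oo[); rewrite setTI.
by congr measurable; apply/seteqP; split => w /=; rewrite in_itv /= andbT.
Qed.

Lemma measurable_Zlt k : measurable [set w | Z w < k].
Proof.
have := mZ measurableT (measurable_itv `]-oo, k[); rewrite setTI.
by congr measurable; apply/seteqP; split => w /=; rewrite in_itv.
Qed.

Lemma Lfun1_expRMZ al : -a < al < b -> (fun w => expR (al * Z w)) \in Lfun P 1.
Proof.
move=> al_itv; apply/Lfun1_integrable/integrableP; split.
  exact/measurable_EFinP/measurable_expRMZ.
have := expZ_lty al_itv; rewrite unlock.
by under eq_integral do rewrite /= ger0_norm ?expR_ge0//.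
Qed.

Lemma Lfun1_Z : Z \in Lfun P 1.
Proof.
set δ := Num.min a b / 2.
have δ_gt0 : 0 < δ by rewrite divr_gt0 // lt_min a_gt0.
have [δ_lta δ_ltb] : δ < a /\ δ < b.
  by apply/andP; rewrite -lt_min /δ ltr_pdivrMr // ltr_pMr ?lt_min ?a_gt0 // ltr1n.
set g := fun w => δ^-1 * (expR (δ * Z w) + expR (- δ * Z w)).
have Lg : g \in Lfun P 1.
  have -> : g = δ^-1 *: ((fun w => expR (δ * Z w)) + (fun w => expR (- δ * Z w))).
    by apply/funext.
  by rewrite rpredZ // rpredD // Lfun1_expRMZ //; apply/andP; split; lra.
apply/Lfun1_integrable.
apply: (le_integrable measurableT _ _ (proj1 (Lfun1_integrable _ _) Lg)).
  exact/measurable_EFinP.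
move=> w _; rewrite /= lee_fin [leRHS]ger0_norm; last first.
  by rewrite mulr_ge0 ?invr_ge0 ?addr_ge0 ?expR_ge0 ?ltW.
rewrite ler_pdivlMl // mulNr.
by have := normr_le_expR_addN (δ * Z w); rewrite normrM gtr0_norm.
Qed.

Lemma expectation_Z : ('E_P[Z] = mean%:E)%E.
Proof. by rewrite fineK // expectation_fin_num // Lfun1_Z. Qed.

Lemma expectation_expRMZ al :
  -a < al < b -> ('E_P[fun w => expR (al * Z w)] = (mgf al)%:E)%E.
Proof. by move=> al_itv; rewrite fineK // expectation_fin_num // Lfun1_expRMZ. Qed.

Lemma mgf0 : mgf 0 = 1.
Proof.
rewrite /mgf (_ : (fun w => expR (0 * Z w)) = cst 1) ?expectation_cst //.
by apply/funext => w; rewrite mul0r expR0.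
Qed.

Lemma expR_mean_le_mgf s : -a < s < b -> expR (s * mean) <= mgf s.
Proof.
move=> s_itv; rewrite -lee_fin -expectation_expRMZ //.
set e := expR (s * mean).
have LsZ : ((e * s) \o* Z) \in Lfun P 1.
  have -> : (e * s) \o* Z = (e * s) *: Z by apply/funext => w /=; rewrite mulrC.
  by rewrite rpredZ // Lfun1_Z.
pose tangent := cst (e * (1 - s * mean)) \+ ((e * s) \o* Z).
have Ltangent : tangent \in Lfun P 1 by rewrite rpredD ?Lfun_cst.
have -> : e%:E = ('E_P[tangent])%E.
  rewrite expectationD ?Lfun_cst // expectation_cst expectationZl ?Lfun1_Z //.
  by rewrite expectation_Z -EFinM -EFinD; congr EFin; ring.
rewrite !unlock; apply: le_integral => //.
- exact: (proj1 (Lfun1_integrable _ _) Ltangent).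
- exact: (proj1 (Lfun1_integrable _ _) (Lfun1_expRMZ s_itv)).
move=> w _; rewrite /tangent /= lee_fin.
have -> : expR (s * Z w) = e * expR (s * (Z w - mean)).
  by rewrite -expRD; congr expR; ring.
have -> : e * (1 - s * mean) + Z w * (e * s) = e * (1 + s * (Z w - mean)) by ring.
by rewrite ler_wpM2l ?expR_ge0 // expR_ge1Dx.
Qed.

Lemma chernoff_mgf (A : set T) al k : measurable A -> -a < al < b ->
  A `<=` [set w | 0 < al * (Z w - k)] ->
  (P A <= (expR (- (al * k)) * mgf al)%:E)%E.
Proof.
move=> mA al_itv sA; rewrite -expectation_indic //.
have mexp : measurable_fun setT (fun w => expR (al * (Z w - k))).
  apply: measurableT_comp; first exact: measurable_expR.
  apply: measurable_funM; first exact: measurable_cst.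
  by apply: measurable_funB => //; exact: measurable_cst.
apply: (@le_trans _ _ ('E_P[fun w => expR (al * (Z w - k))])%E).
  apply: expectation_le => //; apply: aeW => w /=; rewrite indicE.
  have [wA|_] := boolP (w \in A); last exact: expR_ge0.
  have /= pos := sA _ (set_mem wA).
  by rewrite (le_trans _ (expR_ge1Dx _)) // lerDl ltW.
have -> : (fun w => expR (al * (Z w - k))) =
    expR (- (al * k)) \o* (fun w => expR (al * Z w)).
  by apply/funext => w /=; rewrite -expRD; congr expR; ring.
by rewrite expectationZl ?Lfun1_expRMZ // expectation_expRMZ // -EFinM mulrC.
Qed.

Section log_concave_mgf.
Variable c : R -> R.
Hypothesis c_derivable0 : derivable c 0 1.
Hypothesis log_concave_mgf :
  log_concave_on `]-a, b[ (fun al => expR (- c al) * mgf al).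

Let psi al := c al - c 0 - derive1 c 0 * al.

Lemma mgf_gt0 al : -a < al < b -> 0 < mgf al.
Proof.
move=> al_itv; have [pos _] := log_concave_mgf.
by have := pos al; rewrite /= in_itv /= => /(_ al_itv); rewrite pmulr_rgt0 // expR_gt0.
Qed.

Lemma cgf_le_chord al s : -a < al < b -> -a < s < b -> s * al < 0 ->
  ln (mgf al) - al * mean <= c al - c 0 - al / s * (c s - c 0).
Proof.
move=> al_itv s_itv sal_lt0; have [_ log_cvx] := log_concave_mgf.
have itv0 : `]-a, b[%classic 0 by rewrite /= in_itv /= oppr_lt0 a_gt0.
have log_split x : -a < x < b -> ln (expR (- c x) * mgf x) = - c x + ln (mgf x).
  by move=> x_itv; rewrite lnM ?posrE ?expR_gt0 ?mgf_gt0 // expRK.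
have := concave_on_chord log_cvx s_itv al_itv itv0 sal_lt0.
rewrite !log_split // mgf0 ln1.
have s_neq0 : s != 0 by apply: contraTneq sal_lt0 => ->; rewrite mul0r ltxx.
have als_lt0 : al / s < 0.
  have : 0 < s * s by rewrite -expr2 exprn_even_gt0 //= s_neq0.
  have : al / s * s = al by rewrite divfK.
  nra.
have jensen : s * mean <= ln (mgf s).
  by rewrite -[s * mean]expRK ler_ln ?posrE ?expR_gt0 ?mgf_gt0 // expR_mean_le_mgf.
have : al / s * ln (mgf s) <= al * mean.
  rewrite (_ : al * mean = al / s * (s * mean)); last by rewrite mulrA divfK.
  by rewrite -subr_le0 -mulrBr nmulr_rle0 // subr_ge0.
nra.
Qed.

Lemma cgf_le_psi_near (F : set_system R) {FF : ProperFilter F} al :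
  -a < al < b -> (fun s => (c s - c 0) / s) @ F --> derive1 c 0 ->
  (\forall s \near F, -a < s < b /\ s * al < 0) ->
  ln (mgf al) - al * mean <= psi al.
Proof.
move=> al_itv slope_cvg near_s.
have : al * derive1 c 0 <= c al - c 0 - (ln (mgf al) - al * mean).
  apply: (cvgr_to_le (cvgMl_tmp (a := al) slope_cvg)).
  apply: filterS near_s => s [s_itv sal_lt0].
  have := cgf_le_chord al_itv s_itv sal_lt0.
  by rewrite mulrAC -mulrA; lra.
rewrite /psi; lra.
Qed.

Lemma cgf_le_psi al : -a < al < b -> ln (mgf al) - al * mean <= psi al.
Proof.
move=> al_itv.
have slope : (fun s => (c s - c 0) / s) @ 0^' --> derive1 c 0.
  rewrite (_ : (fun s => _) = (fun h => (c (0 + h) - c 0) / h)).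
    exact: derivable_slope_cvg.
  by apply/funext => h; rewrite add0r.
have [al_lt0|al_gt0|->] := ltgtP al 0.
- apply: (cgf_le_psi_near al_itv (cvg_dnbhs_at_right slope)); near=> s.
  have s_gt0 : 0 < s by near: s; exact: nbhs_right_gt.
  have s_ltb : s < b by near: s; exact: nbhs_right_lt.
  by split; [apply/andP; split|]; nra.
- apply: (cgf_le_psi_near al_itv (cvg_dnbhs_at_left slope)); near=> s.
  have s_lt0 : s < 0 by near: s; exact: nbhs_left_lt.
  have s_gtNa : -a < s by near: s; apply: nbhs_left_gt; rewrite oppr_lt0.
  by split; [apply/andP; split|]; nra.
- by rewrite /psi mgf0 ln1 !mul0r mulr0; lra.
Unshelve. all: by end_near.
Qed.

Lemma tail_le_expeR_fenchel_dual (A : set T) (D : set R) x : measurable A ->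
  (forall y, D y -> -a < y < b /\ A `<=` [set w | 0 < y * (Z w - (mean + x))]) ->
  (P A <= expeR (- fenchel_dual D psi x))%E.
Proof.
move=> mA chernoff_sets; have PA_fin : P A \is a fin_num by rewrite fin_num_measure.
rewrite -(fineK PA_fin); apply: le_expeR_fenchel_dual; first exact: fine_ge0.
move=> y /chernoff_sets[y_itv sA].
have := chernoff_mgf mA y_itv sA; rewrite -(fineK PA_fin) lee_fin => PA_le.
apply: (le_trans PA_le); rewrite -[mgf y](lnK (mgf_gt0 y_itv)) -expRD ler_expR.
by have := cgf_le_psi y_itv; lra.
Qed.

Lemma upper_tail_le t :
  (P [set w | (Z w)%:E - 'E_P[Z] > t%:E] <= expeR (- fenchel_dual `]0%R, b[ psi t))%E.
Proof.
rewrite expectation_Z.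
have -> : [set w | t%:E < (Z w)%:E - mean%:E]%E = [set w | mean + t < Z w].
  by apply/seteqP; split => w /=; rewrite -EFinB lte_fin; lra.
apply: tail_le_expeR_fenchel_dual; first exact: measurable_ltZ.
move=> y; rewrite /= in_itv /= => /andP[y_gt0 y_ltb].
split; first by rewrite y_ltb andbT (lt_trans _ y_gt0) // oppr_lt0.
by move=> w /=; nra.
Qed.

Lemma lower_tail_le t :
  (P [set w | (Z w)%:E - 'E_P[Z] < (- t)%:E] <=
     expeR (- fenchel_dual `](- a)%R, 0%R[ psi (- t)%R))%E.
Proof.
rewrite expectation_Z.
have -> : [set w | (Z w)%:E - mean%:E < (- t)%:E]%E = [set w | Z w < mean - t].
  by apply/seteqP; split => w /=; rewrite -EFinB lte_fin; lra.
apply: tail_le_expeR_fenchel_dual; first exact: measurable_Zlt.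
move=> y; rewrite /= in_itv /= => /andP[y_gtNa y_lt0].
split; first by rewrite y_gtNa (lt_trans y_lt0).
by move=> w /=; nra.
Qed.

End log_concave_mgf.
End exponential_moments.

Theorem corollary2p5 (d : measure_display) (T : measurableType d)
  (R : realType) (P : probability T R) (n : nat)
  (X : T -> n.-tuple R) (f : n.-tuple R -> R) (phi : n.-tuple R -> R)
  (a b : R) (c : R -> R) :
  measurable_fun setT X ->
  has_density P X f ->
  measurable_fun setT phi ->
  0 < a -> 0 < b ->
  (forall alpha, -a < alpha < b ->
     ('E_P[fun w => expR (alpha * phi (X w))] < +oo)%E) ->
  smooth_on `]-a, b[ c ->
  log_concave_on `]-a, b[
    (fun alpha => expR (- c alpha) * fine 'E_P[fun w => expR (alpha * phi (X w))]) ->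
  let psi := fun alpha => c alpha - c 0 - derive1 c 0 * alpha in
  forall t, 0 < t ->
    (P [set w | ((phi (X w))%:E - 'E_P[fun w => phi (X w)] > t%:E)%E]
       <= expeR (- fenchel_dual `]0%R, b[ psi t))%E /\
    (P [set w | ((phi (X w))%:E - 'E_P[fun w => phi (X w)] < (- t)%:E)%E]
       <= expeR (- fenchel_dual `](- a)%R, 0%R[ psi (- t)%R))%E.
Proof.
move=> mX _ mphi a_gt0 b_gt0 expZ_lty c_smooth log_concave psi t _.
have mZ : measurable_fun setT (fun w => phi (X w)) by exact: measurableT_comp.
have c_derivable0 : derivable c 0 1.
  by apply: (c_smooth 0%N); rewrite /= in_itv /= oppr_lt0 a_gt0.
split.
- exact: (upper_tail_le mZ a_gt0 b_gt0 expZ_lty c_derivable0 log_concave t).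
- exact: (lower_tail_le mZ a_gt0 b_gt0 expZ_lty c_derivable0 log_concave t).
Qed.
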